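(* Let $b>0$. For any $f\in L^2_{\rm loc}(\mathbb R)$, $\|f\|_{\mathcal S^2}<\infty$ if and only if $\sup_{u\in\mathbb R}\int_{\mathbb R}|f(t+u)|^2\frac{dt}{b^2+t^2}<\infty$. Moreover, $$k_b\,\|f\|_{\mathcal S^2}^2\le\sup_{u\in\mathbb R}\int_{\mathbb R}|f(t+u)|^2\frac{dt}{b^2+t^2}\le K_b\,\|f\|_{\mathcal S^2}^2,$$ where $k_b=\frac{1}{b^2+1}$ and $K_b=2\sum_{w\ge0}\frac{1}{b^2+w^2}+\frac{1}{b^2}$.
   Context: For $f\in L^2_{\rm loc}(\mathbb R)$, $\|f\|_{\mathcal S^2}=\sup_{x\in\mathbb R}\big(\int_x^{x+1}|f(t)|^2dt\big)^{1/2}$. *)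

From HB Require Import structures.
From mathcomp Require Import all_boot all_order all_algebra.
From mathcomp Require Import all_classical all_reals all_analysis.
Set Implicit Arguments. Unset Strict Implicit. Unset Printing Implicit Defensive.
Import Order.TTheory GRing.Theory Num.Theory.
Import numFieldNormedType.Exports.
Local Open Scope classical_set_scope.
Local Open Scope ring_scope.
Local Open Scope ereal_scope.

Definition L2loc (R : realType) (V : normedModType R) (f : R -> V) : Prop :=
  measurable_fun [set: R] (fun t => `|f t|%R) /\
  forall a b : R, (lebesgue_measure).-integrable `[a, b]
                    (fun t => ((`|f t| ^+ 2)%R)%:E).

Definition S2norm (R : realType) (V : normedModType R) (f : R -> V) : \bar R :=
  ereal_sup [set sqrte (\int[lebesgue_measure]_(t in `[x, (x + 1)%R])
                           ((`|f t| ^+ 2)%R)%:E) | x in [set: R]].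

Definition weighted_sup (R : realType) (V : normedModType R) (b : R)
    (f : R -> V) : \bar R :=
  ereal_sup [set \int[lebesgue_measure]_(t in [set: R])
                   ((`|f (t + u)| ^+ 2 / (b ^+ 2 + t ^+ 2))%R)%:E
            | u in [set: R]].

Definition k_const (R : realType) (b : R) : R := (b ^+ 2 + 1)^-1.

Definition K_const (R : realType) (b : R) : \bar R :=
  2%:E * (\sum_(0 <= w <oo) ((b ^+ 2 + (w%:R) ^+ 2)^-1)%:E) + ((b ^+ 2)^-1)%:E.

From HB Require Import structures.
From mathcomp Require Import all_boot all_order all_algebra.
From mathcomp Require Import all_classical all_reals all_analysis.
From mathcomp Require Import measurable_realfun ring lra.
Import Order.TTheory GRing.Theory Num.Theory.
Import numFieldNormedType.Exports.
Local Open Scope classical_set_scope.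
Local Open Scope ring_scope.

(* Translating by u, the weighted integral over a unit window [a, a + 1] is
   squeezed between the window integrals of |f|^2 over [a + u, a + u + 1]
   scaled by 1/(b^2 + max t^2) and 1/(b^2 + min t^2) on the window.  The single
   window [0, 1] gives the lower bound with k_b = 1/(b^2 + 1).  For the upper
   bound, cut R into the shells n <= |t| < n + 1; each is covered by the two
   windows starting at n and at -(n + 1), where t^2 >= n^2, so the integral is
   at most 2 ||f||^2 sum_n 1/(b^2 + n^2), a series dominated by a telescoping
   one. *)

Section integral_setU_le.
Local Open Scope ereal_scope.
Context {d} {T : measurableType d} {R : realType} (mu : {measure set T -> \bar R}).

Lemma ge0_integral_setU_le (A B : set T) (f : T -> \bar R) :
  measurable A -> measurable B -> measurable_fun (A `|` B) f ->
  (forall x, (A `|` B) x -> 0 <= f x) ->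
  \int[mu]_(x in A `|` B) f x <= \int[mu]_(x in A) f x + \int[mu]_(x in B) f x.
Proof.
move=> mA mB mf f0; have mAB : measurable (A `|` B) by exact: measurableU.
rewrite -[in X in X <= _](setDUK (@subsetUl _ A B : A `<=` A `|` B)).
rewrite ge0_integral_setU ?setDUK ?disj_set2E ?setDIK //; last exact: measurableD.
apply: leeD2l; apply: ge0_subset_integral => //.
- exact: measurableD.
- exact: measurable_funS mf.
- by move=> x Bx; apply: f0; right.
- by move=> x [[]].
Qed.

End integral_setU_le.

Section lebesgue_shift.
Local Open Scope ereal_scope.
Context {R : realType}.
Local Notation mu := (@lebesgue_measure R).

Lemma measurable_shift (c : R) :
  measurable_fun [set: measurableTypeR R] (shift c : _ -> measurableTypeR R).
Proof. exact: measurable_funD. Qed.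

HB.instance Definition _ (c : R) := isMeasurableFun.Build _ _ _ _
  (shift c : measurableTypeR R -> measurableTypeR R) (measurable_shift c).

Lemma lebesgue_measure_shift (c : R) (A : set R) : measurable A ->
  pushforward mu (shift c : _ -> measurableTypeR R) A = mu A.
Proof.
move=> mA; apply/esym/lebesgue_measure_unique => //= _ [[x y]] _ <-; rewrite /pushforward.
have -> : shift c @^-1` `]x, y]%classic = `](x - c)%R, (y - c)%R]%classic.
  by apply/seteqP; split => t /=; rewrite !in_itv /= ?lerBrDr ?ltrBlDr.
rewrite !lebesgue_measure_itv /= !lte_fin ltrD2r.
by case: ifP => // _; rewrite -!EFinD opprB addrA subrK.
Qed.

Lemma ge0_integral_shift (c : R) (D : set R) (g : R -> \bar R) :
  measurable D -> measurable_fun D g -> (forall x, D x -> 0 <= g x) ->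
  \int[mu]_(x in shift c @^-1` D) g (x + c)%R = \int[mu]_(y in D) g y.
Proof.
move=> mD mg g0.
have := @ge0_integral_pushforward _ _ _ _ R _ (measurable_shift c) mu D g mD mg.
rewrite /comp => <-; last by move=> y /set_mem; exact: g0.
by apply: eq_measure_integral => A mA _; exact: lebesgue_measure_shift.
Qed.

Lemma ge0_integral_itv_shift (c a b : R) (g : R -> \bar R) :
  measurable_fun `[(a + c)%R, (b + c)%R] g ->
  (forall x, `[(a + c)%R, (b + c)%R]%classic x -> 0 <= g x) ->
  \int[mu]_(x in `[a, b]) g (x + c)%R = \int[mu]_(y in `[(a + c)%R, (b + c)%R]) g y.
Proof.
move=> mg g0; rewrite -(ge0_integral_shift c _ _ (measurable_itv _) mg g0).
by congr (integral _ _ _); apply/seteqP; split => t /=; rewrite !in_itv /= !lerD2r.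
Qed.

End lebesgue_shift.

Section inv_add_sqr.
Context {R : realType}.

Lemma inv_add_sqr_le_telescope (c x : R) : 0 < c -> 0 <= x ->
  (c + x ^+ 2)^-1 <= 2 * (1 + c^-1) * ((x + 1)^-1 - (x + 2)^-1).
Proof.
move=> c0 x0; set y := c^-1.
have cy : c * y = 1 by rewrite divff ?gt_eqF.
have y0 : 0 < y by rewrite invr_gt0.
have amgm : 2 * x <= c + x ^+ 2 * y.
  have : 0 <= y * (c - x) ^+ 2 by rewrite mulr_ge0 ?sqr_ge0 ?ltW.
  have -> : y * (c - x) ^+ 2 = c * (c * y) + x ^+ 2 * y - 2 * x * (c * y) by ring.
  by rewrite cy !mulr1 subr_ge0.
have q0 : 0 < c + x ^+ 2 by rewrite ltr_pwDl ?sqr_ge0.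
have -> : (x + 1)^-1 - (x + 2)^-1 = ((x + 1) * (x + 2))^-1.
  by field; rewrite !gt_eqF //; lra.
rewrite ler_pdivlMr ?mulr_gt0 //; try lra.
rewrite mulrC ler_pdivrMr //.
have : (1 + y) * (c + x ^+ 2) = c + x ^+ 2 + c * y + x ^+ 2 * y by ring.
rewrite cy; nra.
Qed.

Lemma nneseries_inv_add_sqr_le (c : R) : 0 < c ->
  (\sum_(0 <= n <oo) ((c + n%:R ^+ 2)^-1)%:E <= (2 * (1 + c^-1))%:E)%E.
Proof.
move=> c0; apply: lime_le.
  by apply: is_cvg_nneseries => n _ _; rewrite lee_fin invr_ge0 addr_ge0 ?sqr_ge0 ?ltW.
apply: nearW => N; rewrite sumEFin lee_fin.
pose u (n : nat) : R := - (n%:R + 1)^-1.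
have Ac : 0 <= 2 * (1 + c^-1) by rewrite mulr_ge0 // addr_ge0 // invr_ge0 ltW.
apply: (@le_trans _ _ (\sum_(0 <= n < N) 2 * (1 + c^-1) * (u n.+1 - u n))).
  apply: ler_sum => n _; rewrite /u opprK [X in _ * X]addrC -[n.+1%:R]natr1 -addrA.
  exact: inv_add_sqr_le_telescope.
rewrite -mulr_sumr telescope_sumr // /u add0r opprK invr1 -[X in _ <= X]mulr1.
by rewrite ler_wpM2l // gerDr oppr_le0 invr_ge0 addr_ge0.
Qed.

End inv_add_sqr.

Section ereal_sup_sqrte.
Local Open Scope ereal_scope.
Context {T : Type} {R : realType} (A : set T) (I : T -> \bar R).
Local Notation S := (ereal_sup [set sqrte (I x) | x in A]).

Lemma ereal_sup_sqrte_ge0 : A !=set0 -> 0 <= S.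
Proof.
by move=> [x Ax]; apply: le_trans (sqrte_ge0 (I x)) _; apply: ereal_sup_ubound; exists x.
Qed.

Lemma le_sqr_ereal_sup_sqrte x : A x -> 0 <= I x -> I x <= S ^+ 2.
Proof.
move=> Ax Ix; rewrite -[I x]sqr_sqrte // lee_sqr ?sqrte_ge0 ?ereal_sup_sqrte_ge0 //.
  by apply: ereal_sup_ubound; exists x.
by exists x.
Qed.

Lemma sqr_ereal_sup_sqrte_le M : A !=set0 -> 0 <= M ->
  (forall x, A x -> I x <= M) -> S ^+ 2 <= M.
Proof.
move=> A0 M0 IM; rewrite -[M]sqr_sqrte // lee_sqr ?sqrte_ge0 ?ereal_sup_sqrte_ge0 //.
by apply: ge_ereal_sup => _ [x Ax <-]; rewrite lee_sqrt // IM.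
Qed.

End ereal_sup_sqrte.

Section constants.
Context {R : realType} (b : R).

Lemma k_const_gt0 : 0 < k_const b.
Proof. by rewrite invr_gt0 ltr_wpDl ?sqr_ge0. Qed.

Hypothesis b0 : 0 < b.

Lemma K_const_fin_num : K_const b \is a fin_num.
Proof.
rewrite fin_numD fin_numM //= ge0_fin_numE ?nneseries_ge0 //; last first.
  by move=> n _ _; rewrite lee_fin invr_ge0 addr_ge0 ?sqr_ge0.
exact: le_lt_trans (@nneseries_inv_add_sqr_le _ _ (exprn_gt0 2 b0)) (ltry _).
Qed.

Lemma K_const_gt0 : (0 < K_const b)%E.
Proof.
apply: (@lt_le_trans _ _ ((b ^+ 2)^-1)%:E); first by rewrite lte_fin invr_gt0 exprn_gt0.
rewrite leeDr // mule_ge0 // nneseries_ge0 // => n _ _.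
by rewrite lee_fin invr_ge0 addr_ge0 ?sqr_ge0.
Qed.

End constants.

Section shells.
Context {R : realType}.

Definition shell (n : nat) : set R := (fun t => `|t|) @^-1` `[n%:R, n.+1%:R[.

Lemma measurable_shell n : measurable (shell n).
Proof. by rewrite -[shell n]setTI; apply: normr_measurable => //; exact: measurable_itv. Qed.

Lemma bigcup_shell : \bigcup_n shell n = [set: R].
Proof.
apply/seteqP; split => // t _; exists (Num.trunc `|t|) => //.
by rewrite /shell /= in_itv /=; exact: truncn_itv.
Qed.

Lemma trivIset_shell : trivIset [set: nat] shell.
Proof.
apply/trivIsetP => i j _ _; apply: contra_neqP => /eqP/set0P[t].
rewrite /shell /= !in_itv /= => -[/andP[it ti] /andP[jt tj]].
apply/eqP; rewrite eqn_leq -ltnS -(ltr_nat R) (le_lt_trans it tj).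
by rewrite -ltnS -(ltr_nat R) (le_lt_trans jt ti).
Qed.

Lemma shell_subset n :
  shell n `<=` `[n%:R, n%:R + 1] `|` `[- n.+1%:R, - n.+1%:R + 1].
Proof.
move=> t; rewrite /shell /= !in_itv /= -natr1 => /andP[nt tn].
have [t0|t0] := lerP 0 t; [left|right].
  by rewrite ger0_norm // in nt tn; apply/andP; split; lra.
by rewrite ltr0_norm // in nt tn; apply/andP; split; lra.
Qed.

End shells.

Lemma measurable_inv_add_sqr {R : realType} (c : R) : 0 < c ->
  measurable_fun [set: R] (fun t : R => (c + t ^+ 2)^-1).
Proof.
move=> c0; apply: continuous_measurable_fun => t.
apply: (@continuousV R R (fun t : R => c + t ^+ 2)).
  by rewrite gt_eqF // ltr_pwDl ?sqr_ge0.
apply: (@continuousD R R^o R (cst c) (fun t : R => t ^+ 2)).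
  exact: cst_continuous.
exact: exprn_continuous.
Qed.

Section windows.
Local Open Scope ereal_scope.
Context {R : realType}.

Definition window_integral (F : R -> R) (x : R) : \bar R :=
  \int[lebesgue_measure]_(t in `[x, (x + 1)%R]) (F t)%:E.

Definition weighted_integral (b : R) (F : R -> R) (u : R) : \bar R :=
  \int[lebesgue_measure]_(t in [set: R]) ((F (t + u) / (b ^+ 2 + t ^+ 2))%R)%:E.

End windows.

Section weighted_windows.
Local Open Scope ereal_scope.
Context {R : realType} {b : R} {F : R -> R}.
Hypotheses (b0 : (0 < b)%R) (mF : measurable_fun [set: R] F)
  (F0 : forall t, (0 <= F t)%R).
Local Notation mu := (@lebesgue_measure R).
Local Notation weight u := (fun t => ((F (t + u) / (b ^+ 2 + t ^+ 2))%R)%:E).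

Lemma measurable_shifted (u : R) : measurable_fun [set: R] (fun t => F (t + u)).
Proof. by apply: measurableT_comp mF _; exact: measurable_funD. Qed.

Lemma measurable_weight (u : R) : measurable_fun [set: R] (weight u).
Proof.
apply/measurable_EFinP; apply: measurable_funM; first exact: measurable_shifted.
by apply: measurable_inv_add_sqr; rewrite exprn_gt0.
Qed.

Lemma weight_ge0 (u t : R) : 0 <= weight u t.
Proof. by rewrite lee_fin divr_ge0 // addr_ge0 ?sqr_ge0. Qed.

Lemma window_integral_ge0 (x : R) : 0 <= window_integral F x.
Proof. by apply: integral_ge0 => t _; rewrite lee_fin. Qed.

Lemma weighted_integral_ge0 (u : R) : 0 <= weighted_integral b F u.
Proof. by apply: integral_ge0 => t _; exact: weight_ge0. Qed.

Lemma integral_window_scale (m a u : R) : (0 <= m)%R ->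
  \int[mu]_(t in `[a, (a + 1)%R]) ((m * F (t + u))%R)%:E
  = m%:E * window_integral F (a + u).
Proof.
move=> m0; under eq_integral do rewrite EFinM.
rewrite ge0_integralZl_EFin //; last 2 first.
- by move=> t _; rewrite lee_fin.
- by apply/measurable_funTS/measurable_EFinP; exact: measurable_shifted.
congr (_ * _); rewrite (ge0_integral_itv_shift u a (a + 1) (fun y => (F y)%:E)).
- by rewrite /window_integral addrAC.
- by apply/measurable_funTS/measurable_EFinP.
- by move=> t _; rewrite lee_fin.
Qed.

Lemma weighted_window_le (a u c : R) : (0 <= c)%R ->
  (forall t, (a <= t <= a + 1)%R -> (c <= t ^+ 2)%R) ->
  \int[mu]_(t in `[a, (a + 1)%R]) weight u t
  <= ((b ^+ 2 + c)^-1)%:E * window_integral F (a + u).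
Proof.
have b20 : (0 < b ^+ 2)%R by rewrite exprn_gt0.
move=> c0 ct; have k0 : (0 <= (b ^+ 2 + c)^-1)%R by rewrite invr_ge0 addr_ge0 // ltW.
rewrite -integral_window_scale //; apply: ge0_le_integral => //.
- by move=> t _; exact: weight_ge0.
- exact: measurable_funTS (measurable_weight u).
- apply/measurable_funTS/measurable_EFinP.
  by apply: measurable_funM; [exact: measurable_cst|exact: measurable_shifted].
move=> t; rewrite /= in_itv /= => /ct tc; rewrite lee_fin mulrC; apply: ler_wpM2r => //.
by rewrite lef_pV2 ?posrE ?ltr_wpDr ?sqr_ge0 ?lerD2l.
Qed.

Lemma weighted_window_ge (a u C : R) : (0 <= C)%R ->
  (forall t, (a <= t <= a + 1)%R -> (t ^+ 2 <= C)%R) ->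
  ((b ^+ 2 + C)^-1)%:E * window_integral F (a + u)
  <= \int[mu]_(t in `[a, (a + 1)%R]) weight u t.
Proof.
have b20 : (0 < b ^+ 2)%R by rewrite exprn_gt0.
move=> C0 tC; have k0 : (0 <= (b ^+ 2 + C)^-1)%R by rewrite invr_ge0 addr_ge0 // ltW.
rewrite -integral_window_scale //; apply: ge0_le_integral => //.
- by move=> t _; rewrite lee_fin mulr_ge0.
- apply/measurable_funTS/measurable_EFinP.
  by apply: measurable_funM; [exact: measurable_cst|exact: measurable_shifted].
- exact: measurable_funTS (measurable_weight u).
move=> t; rewrite /= in_itv /= => /tC tC'; rewrite lee_fin [X in (_ <= X)%R]mulrC.
by apply: ler_wpM2r => //; rewrite lef_pV2 ?posrE ?ltr_wpDr ?sqr_ge0 ?lerD2l.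
Qed.

Lemma k_window_le_weighted_integral (x : R) :
  (k_const b)%:E * window_integral F x <= weighted_integral b F x.
Proof.
rewrite -{1}[x]add0r; apply: le_trans (weighted_window_ge 0 x 1 ler01 _) _.
  by move=> t /andP[t0 t1]; rewrite add0r in t1; nra.
apply: ge0_subset_integral => //; first exact: measurable_weight.
by move=> t _; exact: weight_ge0.
Qed.

Lemma weighted_shell_le (u s : R) (n : nat) :
  (forall x, window_integral F x <= s%:E) ->
  \int[mu]_(t in shell n) weight u t
  <= (2 * s)%:E * ((b ^+ 2 + n%:R ^+ 2)^-1)%:E.
Proof.
move=> Fs; have n0 : (0 <= n%:R :> R)%R by [].
apply: le_trans (ge0_subset_integral mu (measurable_shell n)
  (measurableU _ _ (measurable_itv _) (measurable_itv _))
  (measurable_funTS (measurable_weight u)) (fun t _ => weight_ge0 u t) (shell_subset n)) _.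
apply: le_trans (ge0_integral_setU_le mu _ _ _ (measurable_itv _) (measurable_itv _)
  (measurable_funTS (measurable_weight u)) (fun t _ => weight_ge0 u t)) _.
have Fk x : ((b ^+ 2 + n%:R ^+ 2)^-1)%:E * window_integral F x
    <= ((b ^+ 2 + n%:R ^+ 2)^-1 * s)%:E.
  by rewrite EFinM lee_wpmul2l // lee_fin invr_ge0 addr_ge0 ?sqr_ge0.
apply: le_trans (leeD (weighted_window_le n%:R u (n%:R ^+ 2) (sqr_ge0 _) _)
                      (weighted_window_le (- n.+1%:R) u (n%:R ^+ 2) (sqr_ge0 _) _)) _.
- by move=> t /andP[nt _]; rewrite !expr2 ler_pM.
- move=> t /andP[_]; rewrite -natr1 opprD subrK -lerNr => tn.
  by rewrite -[(t ^+ 2)%R]sqrrN !expr2 ler_pM.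
apply: le_trans (leeD (Fk _) (Fk _)) _.
by rewrite -EFinD -EFinM lee_fin le_eqVlt; apply/orP; left; apply/eqP; ring.
Qed.

Lemma weighted_integral_le (u s : R) : (0 <= s)%R ->
  (forall x, window_integral F x <= s%:E) ->
  weighted_integral b F u <= K_const b * s%:E.
Proof.
move=> s0 Fs; rewrite /weighted_integral -bigcup_shell ge0_integral_bigcup //; last 4 first.
- exact: measurable_shell.
- exact: measurable_funTS (measurable_weight u).
- by move=> t _; exact: weight_ge0.
- exact: trivIset_shell.
apply: (@le_trans _ _ (\sum_(0 <= n <oo) (2 * s)%:E * ((b ^+ 2 + n%:R ^+ 2)^-1)%:E)).
  apply: lee_nneseries => [n _ _|n _]; last exact: weighted_shell_le.
  by apply: integral_ge0 => t _; exact: weight_ge0.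
rewrite nneseriesZl; last by move=> n _; rewrite lee_fin invr_ge0 addr_ge0 ?sqr_ge0.
rewrite /K_const EFinM muleAC; apply: lee_wpmul2r; first by rewrite lee_fin.
by apply: leeDl; rewrite lee_fin invr_ge0 sqr_ge0.
Qed.

Lemma k_sqr_window_sup_le :
  (k_const b)%:E * (ereal_sup [set sqrte (window_integral F x) | x in [set: R]]) ^+ 2
  <= ereal_sup [set weighted_integral b F u | u in [set: R]].
Proof.
set W := ereal_sup [set weighted_integral _ _ _ | _ in _].
have W0 : 0 <= W.
  by apply: le_trans (weighted_integral_ge0 0) _; apply: ereal_sup_ubound; exists 0%R.
move/gee0P: W0 => [->|[w w0 Ew]]; first exact: leey.
rewrite Ew -lee_pdivlMl ?k_const_gt0 //; apply: sqr_ereal_sup_sqrte_le.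
- by exists 0%R.
- by rewrite -EFinM lee_fin mulr_ge0 // invr_ge0 ltW ?k_const_gt0.
- move=> x _; rewrite lee_pdivlMl ?k_const_gt0 // -Ew.
  apply: le_trans (k_window_le_weighted_integral x) _.
  by apply: ereal_sup_ubound; exists x.
Qed.

Lemma weighted_sup_le_K :
  ereal_sup [set weighted_integral b F u | u in [set: R]]
  <= K_const b * (ereal_sup [set sqrte (window_integral F x) | x in [set: R]]) ^+ 2.
Proof.
set S := ereal_sup [set sqrte _ | _ in _].
have S0 : 0 <= S by apply: ereal_sup_sqrte_ge0; exists 0%R.
move/gee0P: S0 => [Sy|[s _ Es]].
  by rewrite Sy expe2 mulyy gt0_muley ?K_const_gt0 // leey.
rewrite Es; apply: ge_ereal_sup => _ [u _ <-]; rewrite -EFin_expe.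
apply: weighted_integral_le; first exact: sqr_ge0.
by move=> x; rewrite EFin_expe -Es le_sqr_ereal_sup_sqrte ?window_integral_ge0.
Qed.

End weighted_windows.

Theorem lemma6p5 (R : realType) (V : normedModType R) (b : R) (hb : 0 < b)
    (f : R -> V) (hf : L2loc f) :
  ((S2norm f < +oo)%E <-> (weighted_sup b f < +oo)%E) /\
  ((k_const b)%:E * (S2norm f ^+ 2) <= weighted_sup b f)%E /\
  (weighted_sup b f <= K_const b * (S2norm f ^+ 2))%E.
Proof.
pose F t := `|f t| ^+ 2.
have mF : measurable_fun [set: R] F by apply: measurable_funX; exact: hf.1.
have F0 t : 0 <= F t by exact: sqr_ge0.
have lower : ((k_const b)%:E * (S2norm f ^+ 2) <= weighted_sup b f)%E :=
  k_sqr_window_sup_le hb mF F0.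
have upper : (weighted_sup b f <= K_const b * (S2norm f ^+ 2))%E :=
  weighted_sup_le_K hb mF F0.
split; last by split.
have S0 : (0 <= S2norm f)%E by apply: ereal_sup_sqrte_ge0; exists 0.
move/gee0P: S0 => [Sy|[s _ Es]].
- rewrite Sy ltxx; split => // Wy; move: lower.
  rewrite Sy expe2 mulyy gt0_muley ?lte_fin ?k_const_gt0 // leye_eq => /eqP W.
  by rewrite W ltxx in Wy.
- rewrite Es ltry; split => // _; apply: le_lt_trans upper _.
  rewrite Es -EFin_expe; apply: lte_mul_pinfty; last exact: ltry.
  - exact/ltW/K_const_gt0.
  - exact: K_const_fin_num.
Qed.
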